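(* Let $G$ be a graph containing no cycle of length 6, let $x\in V(G)$, and let $A$ be a bipartite connected component of $G[N_2(x)]$ with vertex sets of bipartition $V_1$ and $V_2$. Then for each $i\in\{1,2\}$, if $|V_i|\ge 2$ then $|N(x)\cap N(V_i)|=1$.
   Context: All graphs are finite, simple and undirected; ''containing no cycle of length 6'' means having no subgraph (not necessarily induced) isomorphic to $C_6$. $N_i(S)$ denotes the set of vertices at distance exactly $i$ from the vertex set $S$, $N(S)=N_1(S)$, $N(v)=N(\{v\})$, $N_2(v)=N_2(\{v\})$. *)

From mathcomp Require Import all_boot.
Set Implicit Arguments. Unset Strict Implicit. Unset Printing Implicit Defensive.

Section Graphs.
Variable T : finType.
Variable e : rel T.

Definition simple_graph := symmetric e /\ irreflexive e.

(* G contains a 6-cycle as a (not necessarily induced) subgraph: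
   six pairwise distinct vertices v_0..v_5 with v_i v_{i+1 mod 6} edges. *)
Definition has_C6 :=
  exists v : 'I_6 -> T, injective v /\
    forall i : 'I_6, e (v i) (v (ordS i)).

Fixpoint walk (k : nat) (x y : T) : bool :=
  match k with
  | 0 => x == y
  | k'.+1 => [exists z, e x z && walk k' z y]
  end.

(* N_i(S): vertices at distance exactly i from S *)
Definition Ni (i : nat) (S : {set T}) : {set T} :=
  [set y | [exists s in S, walk i s y] &&
           [forall j : 'I_i, forall s in S, ~~ walk j s y]].

Definition Nset (S : {set T}) := Ni 1 S.
Definition N1 (v : T) := Ni 1 [set v].
Definition N2 (v : T) := Ni 2 [set v].

Definition induced (W : {set T}) : rel T :=
  fun a b => [&& e a b, a \in W & b \in W].

Definition is_component (W A : {set T}) :=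
  exists2 a0, a0 \in W & A = [set y in W | connect (induced W) a0 y].

Definition is_bipartition (A V1 V2 : {set T}) :=
  [/\ V1 :|: V2 = A, [disjoint V1 & V2],
      {in V1 &, forall a b, ~~ e a b} & {in V2 &, forall a b, ~~ e a b}].
End Graphs.

(* Every vertex u of N(x) adjacent to V1 is adjacent to all of V1: if u ~ b and
   b, b' in V1 have a common neighbour c in N2(x), the neighbour w of b' in N(x)
   must be u, otherwise x u b c b' w is a 6-cycle; and any two vertices of V1
   are joined by such steps since A is connected and bipartite.  Two distinct
   vertices u, w of N(x) adjacent to V1 would then close the 6-cycle
   x u a c b w through two vertices a, b of V1 with a common neighbour c. *)
From mathcomp Require Import all_boot.
Set Implicit Arguments. Unset Strict Implicit. Unset Printing Implicit Defensive.

Lemma connect_preserved (T : finType) (R : rel T) (Q : T -> Prop) a b :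
  (forall y z, R y z -> Q y -> Q z) -> Q a -> connect R a b -> Q b.
Proof.
move=> stepQ + /connectP[p]; elim: p a => [|z p IHp] a Qa /=.
  by move=> _ ->.
by case/andP=> Raz; apply: IHp; apply: stepQ Raz Qa.
Qed.

Section Graph.
Variables (T : finType) (e : rel T).
Hypotheses (e_sym : symmetric e) (e_irr : irreflexive e).

Lemma walk1 y z : walk e 1 y z = e y z.
Proof.
apply/existsP/idP => [[w /andP[eyw /eqP <-]] //|eyz].
by exists z; rewrite eyz eqxx.
Qed.

Lemma in_Nset (S : {set T}) y :
  (y \in Nset e S) = [exists s in S, e s y] && (y \notin S).
Proof.
rewrite inE; congr andb.
  by apply: eq_existsb => s; rewrite walk1.
apply/forallP/idP => [/(_ ord0)/forallP notS|yS [[|//] j]].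
  by apply/negP => yS; have := notS y; rewrite yS /= eqxx.
by apply/forall_inP => s sS /=; apply: contra yS => /eqP <-.
Qed.

Lemma in_N1 x y : (y \in N1 e x) = e x y.
Proof.
rewrite -[N1 e x]/(Nset e [set x]) in_Nset in_set1.
apply/andP/idP => [[/exists_inP[s /set1P -> //]]|exy].
split; first by apply/exists_inP; exists x; rewrite ?set11.
by apply: contraL exy => /eqP ->; rewrite e_irr.
Qed.

Lemma mem_N2 x y :
  y \in N2 e x -> [/\ exists2 z, e x z & e z y, ~~ e x y & y != x].
Proof.
rewrite inE => /andP[/exists_inP[s /set1P ->] /existsP[z /andP[exz ezy]]].
move=> /forallP far.
split; first by exists z; rewrite // -walk1.
- by have /forall_inP := far (@Ordinal 2 1 isT) => /(_ x (set11 x)); rewrite walk1.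
- by have /forall_inP := far ord0 => /(_ x (set11 x)); rewrite eq_sym.
Qed.

Lemma N1_Nset_sub_N2 x (S : {set T}) u : {subset S <= N2 e x} ->
  (u \in N1 e x :&: Nset e S) = e x u && [exists s in S, e s u].
Proof.
move=> SN2; rewrite inE in_N1 in_Nset; case exu: (e x u) => //=.
suff -> : u \notin S by rewrite andbT.
by apply: contraTN exu => /SN2 /mem_N2[].
Qed.

Lemma hexagon_has_C6 v0 v1 v2 v3 v4 v5 :
  uniq [:: v0; v1; v2; v3; v4; v5] ->
  e v0 v1 -> e v1 v2 -> e v2 v3 -> e v3 v4 -> e v4 v5 -> e v5 v0 -> has_C6 e.
Proof.
move=> uniq_v e01 e12 e23 e34 e45 e50.
exists (fun i : 'I_6 => nth v0 [:: v0; v1; v2; v3; v4; v5] i); split.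
  by move=> i j /eqP; rewrite nth_uniq // => /eqP /val_inj.
by case=> [[|[|[|[|[|[|]]]]]]].
Qed.

Lemma N2_hexagon_has_C6 x u w a b c :
  a \in N2 e x -> b \in N2 e x -> c \in N2 e x -> a != b -> u != w ->
  e x u -> e x w -> e u a -> e w b -> e a c -> e c b -> has_C6 e.
Proof.
move=> /mem_N2[_ xa ax] /mem_N2[_ xb bx] /mem_N2[_ xc cx] ab uw xu xw ua wb ac cb.
have adj_neq p q : e p q -> p != q by apply: contraTneq => ->; rewrite e_irr.
have N1_neq p q : e x p -> ~~ e x q -> p != q.
  by move=> xp; apply: contraNneq => <-.
have bw : e b w by rewrite e_sym.
have wx : e w x by rewrite e_sym.
apply: (hexagon_has_C6 _ xu ua ac cb bw wx).
rewrite /= !inE !negb_or !andbT (eq_sym x a) (eq_sym x b) (eq_sym x c).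
rewrite (eq_sym a w) (eq_sym c w) (eq_sym b w) ax bx cx ab uw.
by rewrite !(N1_neq u) ?(N1_neq w) ?(adj_neq x) ?(adj_neq a) ?(adj_neq c).
Qed.

Lemma is_bipartition_sym (A V1 V2 : {set T}) :
  is_bipartition e A V1 V2 -> is_bipartition e A V2 V1.
Proof. by case=> ? ? ? ?; split; rewrite 1?setUC 1?disjoint_sym. Qed.

Section Bipartition.
Variables (A V1 V2 : {set T}).
Hypothesis bip : is_bipartition e A V1 V2.

Lemma part1_sub : {subset V1 <= A}.
Proof. by case: bip => <- _ _ _ y yV1; rewrite inE yV1. Qed.

Lemma part1_nbr y z : y \in V1 -> z \in A -> e y z -> z \in V2.
Proof.
case: bip => <- _ V1_stable _ yV1; rewrite inE => /orP[zV1|//].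
by rewrite (negPf (V1_stable y z yV1 zV1)).
Qed.

Lemma part1_not2 y : y \in V1 -> y \notin V2.
Proof. by case: bip => _ dis _ _ /(disjointFr dis) ->. Qed.

End Bipartition.

Section BipartiteComponent.
Variables (W A V1 V2 : {set T}).
Hypotheses (A_comp : is_component e W A) (A_bip : is_bipartition e A V1 V2).

Lemma component_sub : {subset A <= W}.
Proof. by case: A_comp => a0 _ -> y; rewrite inE => /andP[]. Qed.

Lemma component_connect y z : y \in A -> z \in A -> connect (induced e W) y z.
Proof.
have sym_ind : symmetric (induced e W).
  by move=> p q; rewrite /induced e_sym (andbC (p \in W)).
case: A_comp => a0 _ ->; rewrite !inE => /andP[_ a0y] /andP[_ a0z].
by apply: connect_trans a0z; rewrite (sym_connect_sym sym_ind).
Qed.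

Lemma component_closed y z : induced e W y z -> y \in A -> z \in A.
Proof.
case: A_comp => a0 _ -> yz; have /and3P[_ _ zW] := yz.
by rewrite !inE zW => /andP[_ /connect_trans]; apply; apply: connect1.
Qed.

Lemma part1_propagate (P : pred T) :
  (forall b b' c, b \in V1 -> b' \in V1 -> c \in A -> e b c -> e c b' ->
     P b -> P b') ->
  forall a y, a \in V1 -> y \in V1 -> P a -> P y.
Proof.
move=> stepP a y aV1 yV1 Pa.
pose Q z := [/\ z \in A, z \in V1 -> P z &
                z \in V2 -> forall b, b \in V1 -> e z b -> P b].
suff [] : Q y by move=> _ /(_ yV1).
have aA := part1_sub A_bip aV1; have yA := part1_sub A_bip yV1.
apply: (connect_preserved (Q := Q) _ _ (component_connect aA yA)); last first.
  split=> [||aV2] //.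
  by rewrite (negPf (part1_not2 A_bip aV1)) in aV2.
move=> y' z yz [y'A P1 P2]; have zA := component_closed yz y'A.
have /and3P[ey'z _ _] := yz.
split=> // [zV1|zV2 b bV1 ezb].
  have y'V2 : y' \in V2 by rewrite (part1_nbr A_bip zV1) // e_sym.
  exact: P2 y'V2 z zV1 ey'z.
have y'V1 : y' \in V1.
  by rewrite (part1_nbr (is_bipartition_sym A_bip) zV2) // e_sym.
exact: stepP y'V1 bV1 zA ey'z ezb (P1 y'V1).
Qed.

Lemma part1_common_nbr : 1 < #|V1| ->
  exists a b c, [/\ a \in V1, b \in V1, a != b, c \in A & e a c && e c b].
Proof.
case/card_gt1P=> a [b [aV1 bV1 ab]].
have [|none] := boolP [exists a' in V1, exists b' in V1, exists c in A,
                         [&& a' != b', e a' c & e c b']].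
  case/exists_inP=> a' a'V1 /exists_inP[b' b'V1 /exists_inP[c cA /and3P[]]].
  by move=> a'b' a'c cb'; exists a', b', c; rewrite a'c.
(* Otherwise the only step of propagation is b1 = b2, so [pred1 a] holds on V1. *)
suff : b == a by rewrite eq_sym (negPf ab).
apply: (part1_propagate (P := pred1 a) _ aV1 bV1 (eqxx a)).
move=> b1 b2 c b1V1 b2V1 cA b1c cb2 /eqP <-; apply: contraR none => b1b2.
apply/exists_inP; exists b1 => //; apply/exists_inP; exists b2 => //.
by apply/exists_inP; exists c; rewrite // eq_sym b1b2 b1c.
Qed.

End BipartiteComponent.

Section SecondNeighbourhood.
Variables (x : T) (A V1 V2 : {set T}).
Hypotheses (noC6 : ~ has_C6 e) (A_comp : is_component e (N2 e x) A)
  (A_bip : is_bipartition e A V1 V2).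

Let A_N2 : {subset A <= N2 e x} := component_sub A_comp.

Let V1_N2 y (yV1 : y \in V1) : y \in N2 e x := A_N2 (part1_sub A_bip yV1).

Lemma N1_adj_part1_all u a y :
  e x u -> a \in V1 -> e u a -> y \in V1 -> e u y.
Proof.
move=> xu aV1 ua yV1.
apply: (part1_propagate A_comp A_bip (P := e u) _ aV1 yV1 ua).
move=> b b' c bV1 b'V1 cA bc cb' ub.
have [<- //|bb'] := eqVneq b b'.
have [[w xw wb'] _ _] := mem_N2 (V1_N2 b'V1).
have [-> //|uw] := eqVneq u w.
case: noC6.
exact: N2_hexagon_has_C6 (V1_N2 bV1) (V1_N2 b'V1) (A_N2 cA) bb' uw xu xw
  ub wb' bc cb'.
Qed.

Lemma card_N1_Nset_part1 : 1 < #|V1| -> #|N1 e x :&: Nset e V1| = 1.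
Proof.
move/(part1_common_nbr A_comp A_bip)=> [a [b [c [aV1 bV1 ab cA /andP[ac cb]]]]].
have [[z xz za] _ _] := mem_N2 (V1_N2 aV1).
apply/eqP/cards1P; exists z; apply/setP => u; rewrite in_set1 N1_Nset_sub_N2 //.
apply/andP/eqP => [[xu /exists_inP[a' a'V1 a'u]]|->]; last first.
  by split=> //; apply/exists_inP; exists a; rewrite // e_sym.
have [// | uz] := eqVneq u z; case: noC6.
have uV1 := N1_adj_part1_all xu a'V1 (etrans (e_sym _ _) a'u).
have zV1 := N1_adj_part1_all xz aV1 za.
exact: N2_hexagon_has_C6 (V1_N2 aV1) (V1_N2 bV1) (A_N2 cA) ab uz xu xz
  (uV1 a aV1) (zV1 b bV1) ac cb.
Qed.

End SecondNeighbourhood.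
End Graph.

Theorem lemma2p4 (T : finType) (e : rel T) (x : T) (A V1 V2 : {set T}) :
  simple_graph e -> ~ has_C6 e ->
  is_component e (N2 e x) A ->
  is_bipartition e A V1 V2 ->
  forall V, (V = V1 \/ V = V2) ->
    1 < #|V| -> #|N1 e x :&: Nset e V| = 1.
Proof.
move=> [e_sym e_irr] noC6 A_comp A_bip V [->|->].
  exact: card_N1_Nset_part1 A_comp A_bip.
exact: card_N1_Nset_part1 A_comp (is_bipartition_sym A_bip).
Qed.
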